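(* Let $K$ be an arbitrary field and let $\tau=(q_{11},q_{12},q_{21},q_{22})$ and $\sigma=(p_{11},p_{12},p_{21},p_{22})$ be diagonal braidings on $K\langle x_1,x_2\rangle$. Then the braided algebras $A_\tau$ and $A_\sigma$ are isomorphic if and only if $\sigma=\tau$ or $\sigma=\tau^*$, where $\tau^*=(q_{22},q_{21},q_{12},q_{11})$.
   Context: $A=K\langle x_1,x_2\rangle$ is the free associative algebra with unit on $x_1,x_2$, with basis the set $X^*$ of words. For $q_{ij}\in K$, the diagonal braiding $\tau=(q_{11},q_{12},q_{21},q_{22})$ on $A$ is the linear map $A\otimes A\to A\otimes A$ given on words $u,v$ by $(u\otimes v)\tau=q_{11}^{s_1t_1}q_{12}^{s_1t_2}q_{21}^{s_2t_1}q_{22}^{s_2t_2}\,(v\otimes u)$, where $s_i$ (resp. $t_i$) is the number of occurrences of $x_i$ in $u$ (resp. $v$) (convention $0^0=1$); this is the unique extension to $A$, making $A$ a braided algebra, of the braiding $x_i\otimes x_j\mapsto q_{ij}x_j\otimes x_i$ of $V=Kx_1+Kx_2$. $A_\tau$ denotes $A$ equipped with $\tau$. An isomorphism of braided algebras $A_\tau\to A_\sigma$ is an algebra isomorphism $\varphi:A\to A$ such that $\tau(\varphi\otimes\varphi)=(\varphi\otimes\varphi)\sigma$, i.e. $(\varphi\otimes\varphi)((u\otimes v)\tau)=((\varphi\otimes\varphi)(u\otimes v))\sigma$ for all $u,v\in A$. *)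

From HB Require Import structures.
From mathcomp Require Import all_boot all_order all_algebra.
From mathcomp Require Import zify.
Set Implicit Arguments. Unset Strict Implicit. Unset Printing Implicit Defensive.
Import Order.TTheory GRing.Theory.
Local Open Scope ring_scope.

(** Words over the alphabet {x_1, x_2}; letter x_{i+1} is encoded by i : 'I_2. *)
Definition word := seq 'I_2.

(** The free algebra A = K<x_1,x_2>: finitely supported coefficient functions
    on the word basis X^* (finite support = vanishing on all long words). *)
Definition fin_supp (K : fieldType) (f : word -> K) : Prop :=
  exists n : nat, forall w : word, (n <= size w)%N -> f w = 0.

Record falg (K : fieldType) := FAlg { coef : word -> K; coef_fin : fin_supp coef }.
Arguments FAlg {K}.

Section Ops.
Variable K : fieldType.

Lemma delta_fin (u : word) : fin_supp (fun w : word => ((w == u)%:R : K)).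
Proof.
exists (size u).+1 => w hw; case: eqP => // E; move: hw; rewrite E; lia.
Qed.
Definition fdelta (u : word) : falg K := FAlg _ (delta_fin u).

Lemma add_fin (a b : falg K) : fin_supp (fun w => coef a w + coef b w).
Proof.
case: a => f [n hf]; case: b => g [m hg]; exists (maxn n m) => w hw /=.
rewrite hf ?hg ?addr0 //; lia.
Qed.
Definition fadd (a b : falg K) : falg K := FAlg _ (add_fin a b).

Lemma scale_fin (k : K) (a : falg K) : fin_supp (fun w => k * coef a w).
Proof. case: a => f [n hf]; exists n => w hw /=; by rewrite hf ?mulr0. Qed.
Definition fscale (k : K) (a : falg K) : falg K := FAlg _ (scale_fin k a).

Definition conv (f g : word -> K) (w : word) : K :=
  \sum_(i < (size w).+1) f (take i w) * g (drop i w).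

Lemma mul_fin (a b : falg K) : fin_supp (conv (coef a) (coef b)).
Proof.
case: a => f [n hf]; case: b => g [m hg]; exists (n + m)%N => w hw /=.
rewrite /conv big1 // => i _.
have hi := ltn_ord i.
case: (leqP n i) => hni.
  by rewrite hf ?mul0r // size_take; case: ltnP => _; lia.
by rewrite hg ?mulr0 // size_drop; lia.
Qed.
Definition fmul (a b : falg K) : falg K := FAlg _ (mul_fin a b).

Definition fone : falg K := fdelta [::].

Definition alg_iso (phi : falg K -> falg K) : Prop :=
  [/\ bijective phi,
      forall a b, phi (fadd a b) = fadd (phi a) (phi b),
      forall k a, phi (fscale k a) = fscale k (phi a),
      forall a b, phi (fmul a b) = fmul (phi a) (phi b) &
      phi fone = fone].

(** Diagonal braidings: q i j = q_{(i+1)(j+1)}. The braiding coefficient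
    (u ⊗ v)τ = bcoef q u v (v ⊗ u), with 0^0 = 1 (x ^+ 0 = 1). *)
Definition bcoef (q : 'M[K]_2) (u v : word) : K :=
  \prod_(i < 2) \prod_(j < 2) q i j ^+ (count_mem i u * count_mem j v).

(** Elements of A ⊗ A are identified with their coefficient functions on the
    basis {a ⊗ b | a, b ∈ X^*}. *)
Definition tensor := word -> word -> K.
Definition tpure (f g : word -> K) : tensor := fun a b => f a * g b.
(** the linear extension of the braiding to A ⊗ A, on coefficients:
    sum_{a,b} T(a,b) (a⊗b) ↦ sum_{a,b} T(a,b) c(a,b) (b⊗a) *)
Definition tbraid (q : 'M[K]_2) (T : tensor) : tensor :=
  fun x y => bcoef q y x * T y x.

(** φ : A_τ -> A_σ is an isomorphism of braided algebras:
    (φ⊗φ)((u⊗v)τ) = ((φ⊗φ)(u⊗v))σ; by linearity it suffices (and is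
    equivalent) to require it on the basis tensors u⊗v, u,v words, where
    (φ⊗φ)((u⊗v)τ) = c_τ(u,v) φ(v)⊗φ(u). *)
Definition braided_iso (q p : 'M[K]_2) (phi : falg K -> falg K) : Prop :=
  alg_iso phi /\
  forall (u v : word) (x y : word),
    bcoef q u v * tpure (coef (phi (fdelta v))) (coef (phi (fdelta u))) x y
    = tbraid p (tpure (coef (phi (fdelta u))) (coef (phi (fdelta v)))) x y.

Definition bstar (q : 'M[K]_2) : 'M[K]_2 :=
  \matrix_(i < 2, j < 2) q (rev_ord i) (rev_ord j).

End Ops.

From mathcomp Require Import all_boot all_order all_algebra.
From mathcomp Require Import zify.
From Stdlib Require Import FunctionalExtensionality ProofIrrelevance.
Set Implicit Arguments. Unset Strict Implicit. Unset Printing Implicit Defensive.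
Import Order.TTheory GRing.Theory.
Local Open Scope ring_scope.

(* (⇐) Any bijection f of the alphabet {x_1, x_2} induces the algebra
   automorphism of K<x_1,x_2> that relabels letters; it transports the
   braiding coefficients, so it is a braided isomorphism A_τ → A_σ as soon as
   p_ij = q_{f(i) f(j)}.  Taking f = id and f = (x_1 x_2) gives σ = τ, τ*.

   (⇒) Let φ be a braided isomorphism and M the 2×2 matrix of the degree-one
   parts of φ(x_1), φ(x_2).  Since φ is multiplicative and unital, the degree-
   one part of φ(a) lies in the row space of M for every basis word a, hence
   (by linearity and an induction principle for finitely supported elements)
   for every a; surjectivity of φ then forces M to be invertible.  So det M ≠ 0,
   i.e. M_11 M_22 ≠ 0 or M_12 M_21 ≠ 0.  Comparing the coefficients of
   x_{s(j)} ⊗ x_{s(i)} in the braiding condition for u = x_i, v = x_j, where s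
   is the identity resp. the transposition, gives q_ij = p_{s(i) s(j)}. *)

Section FreeAlgebra.
Variable K : fieldType.

Lemma falg_ext (a b : falg K) : (forall w, coef a w = coef b w) -> a = b.
Proof.
case: a => fa pa; case: b => fb pb /= eq_ab.
have E : fa = fb by apply: functional_extensionality.
by subst; f_equal; apply: proof_irrelevance.
Qed.

Lemma conv_delta (u v x : word) :
  conv (coef (fdelta K u)) (coef (fdelta K v)) x = ((x == u ++ v)%:R : K).
Proof.
rewrite /conv /=; case: (eqVneq x (u ++ v)) => [Ex | nx].
  have hu : (size u < (size x).+1)%N by rewrite Ex size_cat; lia.
  rewrite (bigD1 (Ordinal hu)) //= big1 ?addr0.
    by rewrite Ex take_size_cat // drop_size_cat // !eqxx mulr1.
  move=> k nk; case: eqP => [Et|]; last by rewrite mul0r.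
  (* the only factorisation x = u v is the one at position size u *)
  exfalso; move/eqP: nk; apply; apply: val_inj => /=.
  have := congr1 size Et; rewrite size_take.
  have hk := ltn_ord k; case: ltnP => [_ //|hk' hs].
  by apply/eqP; rewrite -hs eqn_leq hk' -ltnS hk.
rewrite big1 //= => k _; case: eqP => Et; case: eqP => Ed; rewrite ?mulr0 ?mul0r //.
by move/eqP: nx; case; rewrite -Et -Ed cat_take_drop.
Qed.

Lemma fdelta_cat (u v : word) : fdelta K (u ++ v) = fmul (fdelta K u) (fdelta K v).
Proof. by apply: falg_ext => w /=; rewrite conv_delta. Qed.

Lemma bcoef1 (q : 'M[K]_2) (i j : 'I_2) : bcoef q [:: i] [:: j] = q i j.
Proof.
rewrite /bcoef (bigD1 i) //= [X in _ * X]big1 ?mulr1.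
  rewrite (bigD1 j) //= [X in _ * X]big1 ?mulr1; first by rewrite !eqxx expr1.
  by move=> b /= nb; rewrite eqxx [j == b]eq_sym (negbTE nb) muln0 expr0.
by move=> a /= na; apply: big1 => b _; rewrite [i == a]eq_sym (negbTE na) expr0.
Qed.

Fixpoint words_upto (n : nat) : seq word :=
  if n is m.+1 then [::] :: [seq i :: w | i <- enum 'I_2, w <- words_upto m]
  else [:: [::]].

Lemma mem_words_upto n w : (size w <= n)%N -> w \in words_upto n.
Proof.
elim: n w => [|n IH] [|i w] //= hw.
by rewrite in_cons; apply/orP; right; apply: allpairs_f; rewrite ?mem_enum ?IH.
Qed.

Lemma falg_ind (P : falg K -> Prop) :
  (forall w, P (fdelta K w)) ->
  (forall a b, P a -> P b -> P (fadd a b)) ->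
  (forall k a, P a -> P (fscale k a)) ->
  forall a, P a.
Proof.
move=> Pdelta Padd Pscale a.
have [n hn] := coef_fin a.
have supp_a : forall w, w \notin words_upto n -> coef a w = 0.
  by move=> w /negP hw; apply: hn; rewrite leqNgt; apply/negP => /ltnW/mem_words_upto.
elim: (words_upto n) a supp_a {hn} => [|w s IH] a supp_a.
  suff -> : a = fscale 0 (fdelta K [::]) by apply/Pscale/Pdelta.
  by apply: falg_ext => x /=; rewrite supp_a // mul0r.
set a' := fadd a (fscale (- coef a w) (fdelta K w)).
suff -> : a = fadd a' (fscale (coef a w) (fdelta K w)).
  apply/Padd/Pscale/Pdelta; apply: IH => x hx /=.
  case: eqP => [->|/eqP nx]; first by rewrite mulr1 addrN.
  by rewrite mulr0 addr0 supp_a // in_cons negb_or nx.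
by apply: falg_ext => x /=; rewrite mulNr addrNK.
Qed.

End FreeAlgebra.

Lemma relabel_fin (K : fieldType) (f : 'I_2 -> 'I_2) (a : falg K) :
  fin_supp (fun w => coef a (map f w)).
Proof. by case: a => c [n hn]; exists n => w hw /=; apply: hn; rewrite size_map. Qed.

(* The substitution x_i ↦ x_{g(i)} for g the inverse of f: the coefficient of
   a word w in the image of a is that of the relabelled word (map f w). *)
Definition relabel (K : fieldType) (f : 'I_2 -> 'I_2) (a : falg K) : falg K :=
  FAlg _ (relabel_fin f a).

Section Relabel.
Variable K : fieldType.
Variables f g : 'I_2 -> 'I_2.
Hypotheses (fK : cancel f g) (gK : cancel g f).

Lemma relabel_iso : alg_iso (@relabel K f).
Proof.
split.
- exists (@relabel K g) => a; apply: falg_ext => w /=.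
  + by rewrite -map_comp (eq_map gK) map_id.
  + by rewrite -map_comp (eq_map fK) map_id.
- by move=> a b; apply: falg_ext.
- by move=> k a; apply: falg_ext.
- move=> a b; apply: falg_ext => w /=; rewrite /conv size_map.
  by apply: eq_bigr => i _; rewrite map_take map_drop.
- by apply: falg_ext => -[|x w].
Qed.

Lemma count_relabel (i : 'I_2) (s : word) : count_mem i (map f s) = count_mem (g i) s.
Proof. by rewrite count_map; apply: eq_count => z /=; rewrite (can2_eq fK gK). Qed.

Lemma bcoef_relabel (q p : 'M[K]_2) :
  (forall i j, p i j = q (f i) (f j)) ->
  forall u v, bcoef q (map f u) (map f v) = bcoef p u v.
Proof.
move=> hp u v; rewrite /bcoef (reindex_inj (can_inj fK)) /=.
apply: eq_bigr => i _; rewrite (reindex_inj (can_inj fK)) /=.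
by apply: eq_bigr => j _; rewrite !count_relabel !fK hp.
Qed.

Lemma relabel_braided (q p : 'M[K]_2) :
  (forall i j, p i j = q (f i) (f j)) -> braided_iso q p (@relabel K f).
Proof.
move=> hp; split; first exact: relabel_iso.
move=> u v x y; rewrite /tbraid /tpure /=.
case: (eqVneq (map f x) v) => [<-|_]; last by rewrite !(mulr0, mul0r).
case: (eqVneq (map f y) u) => [<-|_]; last by rewrite !(mulr0, mul0r).
by rewrite (bcoef_relabel hp).
Qed.

End Relabel.

Definition linpart (K : fieldType) (a : falg K) : 'rV[K]_2 := \row_j coef a [:: j].

Lemma linpart_add (K : fieldType) (a b : falg K) :
  linpart (fadd a b) = linpart a + linpart b.
Proof. by apply/rowP => j; rewrite !mxE. Qed.

Lemma linpart_scale (K : fieldType) (k : K) (a : falg K) :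
  linpart (fscale k a) = k *: linpart a.
Proof. by apply/rowP => j; rewrite !mxE. Qed.

Lemma linpart_mul (K : fieldType) (a b : falg K) :
  linpart (fmul a b) = coef a [::] *: linpart b + coef b [::] *: linpart a.
Proof.
apply/rowP => j; rewrite !mxE /= /conv big_ord_recr big_ord_recr big_ord0 /=.
by rewrite add0r [coef a [:: j] * _]mulrC.
Qed.

Lemma linpart_one (K : fieldType) : linpart (fone K) = 0.
Proof. by apply/rowP => j; rewrite !mxE. Qed.

Lemma linpart_letter (K : fieldType) (i : 'I_2) : linpart (fdelta K [:: i]) = 'e_i.
Proof. by apply/rowP => j; rewrite !mxE /= eqseq_cons andbT. Qed.

Lemma det_mx22 (R : comPzRingType) (A : 'M[R]_2) :
  \det A = A ord0 ord0 * A ord_max ord_max - A ord0 ord_max * A ord_max ord0.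
Proof.
rewrite (expand_det_row _ ord0) !big_ord_recl big_ord0 addr0 /cofactor !det_mx11.
rewrite !mxE /= expr0 expr1 mul1r mulN1r mulrN.
by congr (_ * _ - _ * _); congr (A _ _); apply: val_inj.
Qed.

Section LinearMatrix.
Variable K : fieldType.
Variable phi : falg K -> falg K.
Hypothesis phi_iso : alg_iso phi.

Definition linmx : 'M[K]_2 := \matrix_i linpart (phi (fdelta K [:: i])).

Lemma linmxE (i j : 'I_2) : linmx i j = coef (phi (fdelta K [:: i])) [:: j].
Proof. by rewrite !mxE. Qed.

Lemma linpart_phi_word (w : word) : (linpart (phi (fdelta K w)) <= linmx)%MS.
Proof.
have [_ _ _ phiM phi1] := phi_iso.
elim: w => [|i w IH]; first by rewrite phi1 linpart_one sub0mx.
rewrite -cat1s fdelta_cat phiM linpart_mul.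
apply: addmx_sub; apply: scalemx_sub => //.
by rewrite -(rowK (fun i => linpart (phi (fdelta K [:: i])))) row_sub.
Qed.

Lemma linpart_phi (a : falg K) : (linpart (phi a) <= linmx)%MS.
Proof.
have [_ phiD phiZ _ _] := phi_iso.
elim/falg_ind: a => [w|a b ha hb|k a ha]; first exact: linpart_phi_word.
- by rewrite phiD linpart_add addmx_sub.
- by rewrite phiZ linpart_scale scalemx_sub.
Qed.

(* Surjectivity of φ makes the row space of M everything. *)
Lemma linmx_unit : linmx \in unitmx.
Proof.
have [[psi _ phiK] _ _ _ _] := phi_iso.
rewrite -row_full_unit -sub1mx; apply/row_subP => i.
by rewrite row1 -linpart_letter -[fdelta K _]phiK linpart_phi.
Qed.

End LinearMatrix.

Lemma braided_iso_entries (K : fieldType) (q p : 'M[K]_2) (phi : falg K -> falg K)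
    (s : 'I_2 -> 'I_2) :
  braided_iso q p phi -> (forall i, linmx phi i (s i) != 0) ->
  forall i j, q i j = p (s i) (s j).
Proof.
move=> [_ phi_braid] nz i j; have := phi_braid [:: i] [:: j] [:: s j] [:: s i].
rewrite /tbraid /tpure !bcoef1 -!linmxE [linmx _ j _ * _]mulrC.
exact: (mulIf (mulf_neq0 (nz i) (nz j))).
Qed.

Lemma forall_ord2 (P : 'I_2 -> Prop) : P ord0 -> P ord_max -> forall i, P i.
Proof. by move=> P0 P1 [[|[|n]] hn] //; [move: P0 | move: P1]; congr P; apply: val_inj. Qed.

Theorem proposition1 (K : fieldType) (q p : 'M[K]_2) :
  (exists phi : falg K -> falg K, braided_iso q p phi) <->
  (p = q \/ p = bstar q).
Proof.
split=> [[phi phi_braid] | [->|->]].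
- pose M := linmx phi.
  have det_nz : \det M != 0 by rewrite -unitfE -unitmxE linmx_unit //; case: phi_braid.
  (* an invertible 2×2 matrix has a nonzero diagonal or antidiagonal *)
  have : (M ord0 ord0 * M ord_max ord_max != 0) || (M ord0 ord_max * M ord_max ord0 != 0).
    apply: contraTT det_nz => /norP[/negPn/eqP diag0 /negPn/eqP antidiag0].
    by rewrite negbK det_mx22 diag0 antidiag0 subr0.
  case/orP; rewrite mulf_eq0 negb_or => /andP[nz0 nz1].
  + left; apply/matrixP => i j; rewrite (braided_iso_entries (s := id) phi_braid) //.
    exact: forall_ord2.
  + right; apply/matrixP => i j.
    rewrite mxE (braided_iso_entries (s := @rev_ord 2) phi_braid) ?rev_ordK //.
    have rev0 : rev_ord ord0 = ord_max :> 'I_2 by apply: val_inj.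
    have rev1 : rev_ord ord_max = ord0 :> 'I_2 by apply: val_inj.
    by apply: forall_ord2; rewrite ?rev0 ?rev1.
- by exists (@relabel K id); apply: (relabel_braided (g := id)).
- exists (@relabel K (@rev_ord 2)).
  by apply: (relabel_braided (@rev_ordK 2) (@rev_ordK 2)) => i j; rewrite mxE.
Qed.
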